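(* Let $A$ and $Y$ be Hopf algebras and $\rho:Y\to A\otimes Y$ a linear map. Then $\rho$ makes $Y$ a partial $A$-comodule coalgebra in the Hopf-algebraic sense if and only if it makes $Y$ a partial $A$-comodule coalgebra in the multiplier-Hopf-algebraic sense (both defined below).
   Context: Hopf-algebraic sense: (i) $(\varepsilon_A\otimes\imath_Y)\rho=\imath_Y$; (ii) $(\imath_A\otimes\Delta_Y)\rho=(m_A\otimes\imath_Y\otimes\imath_Y)(\imath_A\otimes\tau_{Y,A}\otimes\imath_Y)(\rho\otimes\rho)\Delta_Y$; (iii) $(\imath_A\otimes\rho)\rho=(m_A\otimes\imath_A\otimes\imath_Y)\{(\imath_A\otimes\varepsilon_Y)\rho\otimes[(\Delta_A\otimes\imath_Y)\rho]\}\Delta_Y$, where $m_A$ is multiplication and $\tau_{Y,A}(y\otimes a)=a\otimes y$. Multiplier-Hopf-algebraic sense (with $M(A\otimes Y)=A\otimes Y$ here): put $T:Y\otimes A\to A\otimes Y$, $T(y\otimes a)=\rho(y)(a\otimes1)$. Then: (i) $(\varepsilon_A\otimes\imath_Y)\rho(y)=y$; (ii) $((\imath_Y\otimes T)(\Delta_Y(y)\otimes a))(1\otimes1\otimes y')$ and $(1\otimes1\otimes y')((\imath_Y\otimes T)(\Delta_Y(y)\otimes a))$ lie in $Y\otimes A\otimes Y$; (iii) $(\imath_A\otimes\Delta_Y)T=(T\otimes\imath_Y)(\imath_Y\otimes T)(\Delta_Y\otimes\imath_A)$; (iv) $(\imath_A\otimes T)(T\otimes\imath_A)(\imath_Y\otimes\Delta_A)=((\imath_A\otimes\varepsilon_Y)T\otimes\imath_A\otimes\imath_Y)(\imath_Y\otimes(\Delta_A\otimes\imath_Y)T)(\Delta_Y\otimes\imath_A)$,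 for all $y,y'\in Y$, $a\in A$. *)

(* Vector spaces over a field K are modelled as free
   K-vector spaces {malg K[X]} (finitely supported functions X -> K) on a
   basis X; tensor products are free spaces on products of bases. *)
From HB Require Import structures.
From mathcomp Require Import all_boot all_order all_algebra.
From mathcomp Require Import finmap.
From mathcomp.multinomials Require Import monalg.
Set Implicit Arguments. Unset Strict Implicit. Unset Printing Implicit Defensive.
Import GRing.Theory.
Local Open Scope ring_scope.

Section FreeTensor.
Variable K : fieldType.

Definition vec (X : choiceType) := {malg K[X]}.
Arguments vec X%_type.

Definition bas (X : choiceType) (x : X) : vec X := << x >>.

Definition linext (X Z : choiceType) (f : X -> vec Z) (v : vec X) : vec Z :=
  \sum_(x <- msupp v) v@_x *: f x.

Definition tens (X Y : choiceType) (u : vec X) (v : vec Y) : vec (X * Y) :=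
  \sum_(x <- msupp u) \sum_(y <- msupp v) (u@_x * v@_y) *: bas (x, y).

Definition push (X Z : choiceType) (g : X -> Z) : vec X -> vec Z :=
  linext (fun x => bas (g x)).

Definition tmap (X1 Y1 X2 Y2 : choiceType) (f : vec X1 -> vec X2)
  (g : vec Y1 -> vec Y2) : vec (X1 * Y1) -> vec (X2 * Y2) :=
  linext (fun p => tens (f (bas p.1)) (g (bas p.2))).

(* a linear functional seen as a map into K = V_unit *)
Definition funv (X : choiceType) (e : vec X -> K) (v : vec X) : vec unit :=
  e v *: bas tt.

Definition lunit (X : choiceType) : vec (unit * X) -> vec X := push snd.
Definition runit (X : choiceType) : vec (X * unit) -> vec X := push fst.

Definition asr (X Y Z : choiceType) (p : (X * Y) * Z) : X * (Y * Z) :=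
  (p.1.1, (p.1.2, p.2)).
Definition asl (X Y Z : choiceType) (p : X * (Y * Z)) : (X * Y) * Z :=
  ((p.1, p.2.1), p.2.2).
Definition mid4 (X Y Z W : choiceType) (p : (X * Y) * (Z * W)) :
  (X * Z) * (Y * W) := ((p.1.1, p.2.1), (p.1.2, p.2.2)).

Definition idv (X : choiceType) (v : vec X) : vec X := v.
Arguments idv X%_type v.

Definition linmap (X Z : choiceType) (f : vec X -> vec Z) :=
  forall (a : K) (u v : vec X), f (a *: u + v) = a *: f u + f v.
Definition linfun (X : choiceType) (e : vec X -> K) :=
  forall (a : K) (u v : vec X), e (a *: u + v) = a * e u + e v.

Definition tmul (X Y : choiceType) (mX : vec (X * X) -> vec X)
  (mY : vec (Y * Y) -> vec Y) : vec ((X * Y) * (X * Y)) -> vec (X * Y) :=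
  fun w => tmap mX mY (push (@mid4 X Y X Y) w).

Record hopf_data (X : choiceType) := HopfData {
  hmul : vec (X * X) -> vec X;
  hone : vec X;
  hcomul : vec X -> vec (X * X);
  hcounit : vec X -> K;
  hanti : vec X -> vec X }.

Definition is_hopf (X : choiceType) (H : hopf_data X) : Prop :=
  let m := hmul H in let one := hone H in let D := hcomul H in
  let e := hcounit H in let S := hanti H in
  [/\ linmap m, linmap D, linfun e & linmap S] /\
  [/\
      (forall w : vec ((X * X) * X),
         m (tmap m (@idv X) w) = m (tmap (@idv X) m (push (@asr X X X) w))),
      (forall v, m (tens one v) = v /\ m (tens v one) = v),
      (forall v, push (@asr X X X) (tmap D (@idv X) (D v))
                 = tmap (@idv X) D (D v)),
      (forall v, lunit (tmap (funv e) (@idv X) (D v)) = v /\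
                 runit (tmap (@idv X) (funv e) (D v)) = v) &
      [/\ (forall w, D (m w) = tmul m m (tmap D D w)),
          D one = tens one one,
          (forall u v, e (m (tens u v)) = e u * e v),
          e one = 1 &
      (forall v, m (tmap S (@idv X) (D v)) = e v *: one /\
                 m (tmap (@idv X) S (D v)) = e v *: one)]].

Section Comodule.
Variables (I J : choiceType) (A : hopf_data I) (Y : hopf_data J).
Variable rho : vec J -> vec (I * J).

Local Notation mA := (hmul A). Local Notation DA := (hcomul A).
Local Notation eA := (hcounit A). Local Notation mY := (hmul Y).
Local Notation DY := (hcomul Y). Local Notation eY := (hcounit Y).

Definition partial_comod_coalg_hopf : Prop :=
  [/\
      (forall y, lunit (tmap (funv eA) (@idv J) (rho y)) = y),
      (forall y, tmap (@idv I) DY (rho y)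
         = tmap mA (@idv (J * J))
             (push (@mid4 I J I J) (tmap rho rho (DY y)))) &
      (forall y, tmap (@idv I) rho (rho y)
         = tmap mA (@idv (I * J))
             (push (fun p : I * ((I * I) * J) =>
                      ((p.1, p.2.1.1), (p.2.1.2, p.2.2)))
               (tmap (fun z => runit (tmap (@idv I) (funv eY) (rho z)))
                     (fun z => tmap DA (@idv J) (rho z)) (DY y))))].

Definition Tmap : vec (J * I) -> vec (I * J) :=
  linext (fun p => tmul mA mY (tens (rho (bas p.1)) (tens (bas p.2) (hone Y)))).

Definition Teps : vec (J * I) -> vec I :=
  fun w => runit (tmap (@idv I) (funv eY) (Tmap w)).

(* partial A-comodule coalgebra, multiplier-Hopf-algebraic sense
   (with M(A (x) Y) = A (x) Y) *)
Definition partial_comod_coalg_mult : Prop :=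
  [/\
      (forall y, lunit (tmap (funv eA) (@idv J) (rho y)) = y),
      (forall (y y' : vec J) (a : vec I),
         let z := tmap (@idv J) Tmap (push (@asr J J I) (tens (DY y) a)) in
         let u := tens (hone Y) (tens (hone A) y') in
         (exists w : vec (J * (I * J)),
             w = tmul mY (tmul mA mY) (tens z u)) /\
         (exists w : vec (J * (I * J)),
             w = tmul mY (tmul mA mY) (tens u z))),
      (forall w : vec (J * I),
         tmap (@idv I) DY (Tmap w)
         = push (@asr I J J)
             (tmap Tmap (@idv J)
               (push (@asl J I J)
                 (tmap (@idv J) Tmap
                   (push (@asr J J I) (tmap DY (@idv I) w)))))) &
      (forall w : vec (J * I),
         tmap (@idv I) Tmap
           (push (@asr I J I)
             (tmap Tmap (@idv I)
               (push (@asl J I I) (tmap (@idv J) DA w))))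
         = tmap Teps (@idv (I * J))
             (push (fun p : J * ((I * I) * J) =>
                      ((p.1, p.2.1.1), (p.2.1.2, p.2.2)))
               (tmap (@idv J) (fun v => tmap DA (@idv J) (Tmap v))
                 (push (@asr J J I) (tmap DY (@idv I) w)))))].

End Comodule.
End FreeTensor.
Arguments vec K X%_type.
Arguments idv K X%_type v.

(* Both sides of conditions (iii) and (iv) of the multiplier-Hopf-algebraic
   notion are linear in w in Y (x) A, so they may be compared on w = y (x) a.
   Since T(y (x) a) = rho(y)(a (x) 1), the two sides of (iii) at y (x) a are
   the two sides of (ii) of the Hopf-algebraic notion multiplied on the right
   by a (x) 1 (x) 1, and, Delta_A being multiplicative, the two sides of (iv)
   are those of (iii) multiplied on the right by Delta_A(a) (x) 1.  Hence the
   Hopf-algebraic axioms imply the multiplier ones, and a = 1 gives back the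
   converse.  Condition (i) is shared, and (ii) of the multiplier notion is
   automatic when M(A (x) Y) = A (x) Y. *)

From Pilot Require Import Defs.
From mathcomp Require Import all_boot all_order all_algebra.
From mathcomp Require Import finmap.
From mathcomp.multinomials Require Import monalg.
Set Implicit Arguments. Unset Strict Implicit. Unset Printing Implicit Defensive.
Import GRing.Theory.
Local Open Scope ring_scope.

Section LinearMaps.
Variable K : fieldType.

Lemma linext_subset (X Z : choiceType) (f : X -> vec K Z) (v : vec K X)
    (d : {fset X}) :
  (msupp v `<=` d)%fset -> linext f v = \sum_(x <- d) v@_x *: f x.
Proof.
move=> sub; rewrite /linext (big_fset_incl _ sub) //= => x _ /mcoeff_outdom ->.
by rewrite scale0r.
Qed.

Lemma linmap_linext (X Z : choiceType) (f : X -> vec K Z) : linmap (linext f).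
Proof.
move=> a u v; pose d := (msupp u `|` msupp v)%fset.
have suppZD : (msupp (a *: u + v) `<=` d)%fset.
  by apply: fsubset_trans (msuppD_le _ _) _; apply: fsetUSS => //; apply: msuppZ_le.
rewrite (linext_subset _ suppZD) (linext_subset _ (fsubsetUl _ (msupp v))).
rewrite (linext_subset _ (fsubsetUr (msupp u) _)) scaler_sumr -big_split /=.
by apply: eq_bigr => x _; rewrite mcoeffD mcoeffZ scalerDl scalerA.
Qed.

Lemma linext_bas (X Z : choiceType) (f : X -> vec K Z) (x : X) :
  linext f (bas K x) = f x.
Proof. by rewrite (linext_subset _ msuppU_le) big_seq_fset1 mcoeffUU scale1r. Qed.

Lemma linext_basK (X : choiceType) (v : vec K X) : linext (@bas K X) v = v.
Proof.
rewrite {2}(monalgE v); apply: eq_bigr => x _; apply/malgP => k.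
by rewrite /bas mcoeffZ !mcoeffU mulr_natr.
Qed.

Section Linearity.
Variables (X Z : choiceType) (h : vec K X -> vec K Z).
Hypothesis hlin : linmap h.

Lemma linmapD u v : h (u + v) = h u + h v.
Proof. by have := hlin 1 u v; rewrite !scale1r. Qed.

Lemma linmap0 : h 0 = 0.
Proof. by apply: (@addrI _ (h 0)); rewrite -linmapD !addr0. Qed.

Lemma linmapZ a u : h (a *: u) = a *: h u.
Proof. by have := hlin a u 0; rewrite !addr0 linmap0 addr0. Qed.

Lemma linmap_linextE v : h v = linext (fun x => h (bas K x)) v.
Proof.
rewrite -{1}(linext_basK v) /linext.
elim: (enum_fset (msupp v)) => [|x s IH]; first by rewrite !big_nil linmap0.
by rewrite !big_cons linmapD linmapZ IH.
Qed.

End Linearity.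

Lemma linmap_eq_bas (X Z : choiceType) (h1 h2 : vec K X -> vec K Z) :
  linmap h1 -> linmap h2 -> (forall x, h1 (bas K x) = h2 (bas K x)) ->
  forall v, h1 v = h2 v.
Proof.
move=> lin1 lin2 eq12 v; rewrite (linmap_linextE lin1) (linmap_linextE lin2).
by apply: eq_bigr => x _; rewrite eq12.
Qed.

Lemma linmap_idv (X : choiceType) : linmap (@idv K X).
Proof. by []. Qed.

Lemma linmap_comp (X Y Z : choiceType) (f : vec K Y -> vec K Z)
    (g : vec K X -> vec K Y) :
  linmap f -> linmap g -> linmap (fun v => f (g v)).
Proof. by move=> linf ling a u v; rewrite ling linf. Qed.

Lemma linmap_push (X Z : choiceType) (g : X -> Z) : linmap (@push K X Z g).
Proof. exact: linmap_linext. Qed.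

Lemma linmap_runit (X : choiceType) : linmap (@runit K X).
Proof. exact: linmap_linext. Qed.

Lemma linmap_tmap (X1 Y1 X2 Y2 : choiceType) (f : vec K X1 -> vec K X2)
    (g : vec K Y1 -> vec K Y2) :
  linmap (tmap f g).
Proof. exact: linmap_linext. Qed.

Lemma linmap_tensl (X Y : choiceType) (v : vec K Y) :
  linmap (fun u : vec K X => tens u v).
Proof.
have tensE u : tens u v = linext (fun x => linext (fun y => bas K (x, y)) v) u.
  rewrite /tens /linext; apply: eq_bigr => x _; rewrite scaler_sumr.
  by apply: eq_bigr => y _; rewrite scalerA.
by move=> a u u'; rewrite !tensE linmap_linext.
Qed.

Lemma linmap_tensr (X Y : choiceType) (u : vec K X) :
  linmap (fun v : vec K Y => tens u v).
Proof.
have tensE v : tens u v = linext (fun y => linext (fun x => bas K (x, y)) u) v.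
  rewrite /tens /linext exchange_big; apply: eq_bigr => y _; rewrite scaler_sumr.
  by apply: eq_bigr => x _; rewrite scalerA mulrC.
by move=> a v v'; rewrite !tensE linmap_linext.
Qed.

Lemma linmap_tensl_comp (W X Y : choiceType) (f : vec K W -> vec K X)
    (v : vec K Y) :
  linmap f -> linmap (fun u => tens (f u) v).
Proof. exact: linmap_comp (linmap_tensl v). Qed.

Lemma linmap_tensr_comp (W X Y : choiceType) (u : vec K X)
    (f : vec K W -> vec K Y) :
  linmap f -> linmap (fun v => tens u (f v)).
Proof. exact: linmap_comp (linmap_tensr u). Qed.

Lemma linmap_funv (X : choiceType) (e : vec K X -> K) :
  Defs.linfun e -> linmap (funv e).
Proof. by move=> line a u v; rewrite /funv line scalerDl scalerA. Qed.

Lemma linmap_tmul (X Y : choiceType) (mX : vec K (X * X) -> vec K X)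
    (mY : vec K (Y * Y) -> vec K Y) :
  linmap (tmul mX mY).
Proof. exact: linmap_comp (linmap_tmap _ _) (linmap_push _). Qed.

End LinearMaps.

(* [tens], [tmap] and [push] all unfold to sums over supports, so unifying two
   different such terms is extremely slow: [linmap_tac] only uses hypotheses
   and hints that match syntactically, and the rewrites below are targeted so
   that no rule is tried against a mismatching tensor construction. *)
Create HintDb linmap.

Ltac linmap_tac := repeat match goal with
  | |- linmap (@idv _ _) => exact: linmap_idv
  | |- linmap (fun v => v) => exact: linmap_idv
  | |- linmap (tmap _ _) => exact: linmap_tmap
  | |- linmap (push _) => exact: linmap_push
  | |- linmap (@runit _ _) => exact: linmap_runit
  | |- linmap (tmul _ _) => exact: linmap_tmul
  | |- linmap (fun u => tens u _) => exact: linmap_tensl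
  | |- linmap (tens _) => exact: linmap_tensr
  | |- linmap (fun v => tens _ v) => exact: linmap_tensr
  | |- linmap (funv _) => apply: linmap_funv
  | H : linmap ?g |- linmap ?f => constr_eq g f; exact: H
  | H : Defs.linfun ?g |- Defs.linfun ?e => constr_eq g e; exact: H
  | |- linmap _ => solve [auto with linmap]
  | |- linmap (fun u => tens _ _) =>
      first [apply: linmap_tensl_comp | apply: linmap_tensr_comp]
  | |- linmap (fun x => _) => apply: linmap_comp
  end.

Definition shuffle (X Y Z W : choiceType) (p : X * ((Y * Z) * W)) :
  (X * Y) * (Z * W) := ((p.1, p.2.1.1), (p.2.1.2, p.2.2)).

Section TensorCalculus.
Variable K : fieldType.
Local Notation vec := (vec K).
Local Notation bas := (bas K).

Lemma tens_bas (X Y : choiceType) (x : X) (y : Y) :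
  tens (bas x) (bas y) = bas (x, y).
Proof.
by rewrite /tens /bas !msuppU oner_eq0 !big_seq_fset1 !mcoeffUU mulr1 scale1r.
Qed.

Lemma tmap_bas (X1 Y1 X2 Y2 : choiceType) (f : vec X1 -> vec X2)
    (g : vec Y1 -> vec Y2) (p : X1 * Y1) :
  tmap f g (bas p) = tens (f (bas p.1)) (g (bas p.2)).
Proof. exact: linext_bas. Qed.

Lemma push_bas (X Z : choiceType) (g : X -> Z) (x : X) :
  push g (bas x) = bas (g x).
Proof. exact: linext_bas. Qed.

Lemma linmap_eq_tens (X Y Z : choiceType) (h1 h2 : vec (X * Y) -> vec Z) :
  linmap h1 -> linmap h2 -> (forall u v, h1 (tens u v) = h2 (tens u v)) ->
  forall w, h1 w = h2 w.
Proof.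
by move=> lin1 lin2 eq12; apply: linmap_eq_bas => // -[x y]; rewrite -tens_bas.
Qed.

Lemma tmap_tens (X1 Y1 X2 Y2 : choiceType) (f : vec X1 -> vec X2)
    (g : vec Y1 -> vec Y2) (u : vec X1) (v : vec Y1) :
  linmap f -> linmap g -> tmap f g (tens u v) = tens (f u) (g v).
Proof.
move=> linf ling; move: u; apply: linmap_eq_bas; [linmap_tac|linmap_tac|move=> x].
move: v; apply: linmap_eq_bas; [linmap_tac|linmap_tac|move=> y].
by rewrite tens_bas tmap_bas.
Qed.

Lemma tmap_comp (X1 Y1 X2 Y2 X3 Y3 : choiceType) (f : vec X2 -> vec X3)
    (g : vec Y2 -> vec Y3) (f' : vec X1 -> vec X2) (g' : vec Y1 -> vec Y2) w :
  linmap f -> linmap g ->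
  tmap f g (tmap f' g' w) = tmap (fun x => f (f' x)) (fun y => g (g' y)) w.
Proof.
move=> linf ling; move: w; apply: linmap_eq_bas; [linmap_tac|linmap_tac|move=> p].
by rewrite !tmap_bas tmap_tens.
Qed.

Lemma eq_tmap (X1 Y1 X2 Y2 : choiceType) (f f' : vec X1 -> vec X2)
    (g g' : vec Y1 -> vec Y2) w :
  (forall u, f u = f' u) -> (forall v, g v = g' v) -> tmap f g w = tmap f' g' w.
Proof. by move=> eqf eqg; apply: eq_bigr => p _; rewrite eqf eqg. Qed.

Lemma tmap_idv (X Y : choiceType) (w : vec (X * Y)) :
  tmap (@idv K X) (@idv K Y) w = w.
Proof.
move: w; apply: linmap_eq_bas; [linmap_tac|linmap_tac|move=> [x y]].
by rewrite tmap_bas tens_bas.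
Qed.

Lemma linmap_tmap_l (W X1 Y1 X2 Y2 : choiceType) (F : vec W -> vec X1 -> vec X2)
    (g : vec Y1 -> vec Y2) (w : vec (X1 * Y1)) :
  (forall x, linmap (fun s => F s x)) -> linmap (fun s => tmap (F s) g w).
Proof.
move=> linF a s s'; rewrite /tmap /linext scaler_sumr -big_split /=.
apply: eq_bigr => p _; rewrite linF (linmapD (linmap_tensl _)).
by rewrite (linmapZ (linmap_tensl _)) scalerDr !scalerA mulrC.
Qed.

Lemma linmap_tmap_r (W X1 Y1 X2 Y2 : choiceType) (f : vec X1 -> vec X2)
    (G : vec W -> vec Y1 -> vec Y2) (w : vec (X1 * Y1)) :
  (forall y, linmap (fun s => G s y)) -> linmap (fun s => tmap f (G s) w).
Proof.
move=> linG a s s'; rewrite /tmap /linext scaler_sumr -big_split /=.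
apply: eq_bigr => p _; rewrite linG (linmapD (linmap_tensr _)).
by rewrite (linmapZ (linmap_tensr _)) scalerDr !scalerA mulrC.
Qed.

Lemma push_asr_tens (X Y Z : choiceType) (u : vec X) (v : vec Y) (w : vec Z) :
  push (@asr X Y Z) (tens (tens u v) w) = tens u (tens v w).
Proof.
move: u; apply: linmap_eq_bas; [linmap_tac|linmap_tac|move=> x].
move: v; apply: linmap_eq_bas; [linmap_tac|linmap_tac|move=> y].
move: w; apply: linmap_eq_bas; [linmap_tac|linmap_tac|move=> z].
by rewrite !tens_bas push_bas.
Qed.

Lemma push_asl_tens (X Y Z : choiceType) (u : vec X) (v : vec Y) (w : vec Z) :
  push (@asl X Y Z) (tens u (tens v w)) = tens (tens u v) w.
Proof.
move: u; apply: linmap_eq_bas; [linmap_tac|linmap_tac|move=> x].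
move: v; apply: linmap_eq_bas; [linmap_tac|linmap_tac|move=> y].
move: w; apply: linmap_eq_bas; [linmap_tac|linmap_tac|move=> z].
by rewrite !tens_bas push_bas.
Qed.

Lemma push_mid4_tens (X Y Z W : choiceType) (a : vec X) (b : vec Y)
    (c : vec Z) (d : vec W) :
  push (@mid4 X Y Z W) (tens (tens a b) (tens c d)) = tens (tens a c) (tens b d).
Proof.
move: a; apply: linmap_eq_bas; [linmap_tac|linmap_tac|move=> x].
move: b; apply: linmap_eq_bas; [linmap_tac|linmap_tac|move=> y].
move: c; apply: linmap_eq_bas; [linmap_tac|linmap_tac|move=> z].
move: d; apply: linmap_eq_bas; [linmap_tac|linmap_tac|move=> t].
by rewrite !tens_bas push_bas.
Qed.

Lemma push_shuffle_tens (X Y Z W : choiceType) (a : vec X) (b : vec Y)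
    (c : vec Z) (d : vec W) :
  push (@shuffle X Y Z W) (tens a (tens (tens b c) d)) = tens (tens a b) (tens c d).
Proof.
move: a; apply: linmap_eq_bas; [linmap_tac|linmap_tac|move=> x].
move: b; apply: linmap_eq_bas; [linmap_tac|linmap_tac|move=> y].
move: c; apply: linmap_eq_bas; [linmap_tac|linmap_tac|move=> z].
move: d; apply: linmap_eq_bas; [linmap_tac|linmap_tac|move=> t].
by rewrite !tens_bas push_bas.
Qed.

Lemma push_asr_tensl (X Y Z : choiceType) (t : vec (X * Y)) (v : vec Z) :
  push (@asr X Y Z) (tens t v) = tmap (@idv K X) (fun c => tens c v) t.
Proof.
move: t; apply: linmap_eq_bas; [linmap_tac|linmap_tac|move=> [x y]].
by rewrite -tens_bas push_asr_tens tmap_tens; linmap_tac.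
Qed.

Lemma push_mid4_tensl (X Y Z W : choiceType) (t : vec (X * Y)) (b : vec Z)
    (c : vec W) :
  push (@mid4 X Y Z W) (tens t (tens b c))
  = tmap (fun u => tens u b) (fun u => tens u c) t.
Proof.
move: t; apply: linmap_eq_bas; [linmap_tac|linmap_tac|move=> [x y]].
by rewrite -tens_bas push_mid4_tens tmap_tens; linmap_tac.
Qed.

Lemma push_mid4_tmap (X1 Y1 Z1 W1 X2 Y2 Z2 W2 : choiceType)
    (f : vec X1 -> vec X2) (g : vec Y1 -> vec Y2) (f' : vec Z1 -> vec Z2)
    (g' : vec W1 -> vec W2) w :
  linmap f -> linmap g -> linmap f' -> linmap g' ->
  push (@mid4 X2 Y2 Z2 W2) (tmap (tmap f g) (tmap f' g') w)
  = tmap (tmap f f') (tmap g g') (push (@mid4 X1 Y1 Z1 W1) w).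
Proof.
move=> linf ling linf' ling'.
move: w; apply: linmap_eq_bas; [linmap_tac|linmap_tac|move=> [[x y] [z t]]].
by rewrite push_bas !tmap_bas push_mid4_tens.
Qed.

Lemma push_shuffle_tmap (X1 Y1 Z1 W1 X2 Y2 Z2 W2 : choiceType)
    (f : vec X1 -> vec X2) (g : vec Y1 -> vec Y2) (h : vec Z1 -> vec Z2)
    (k : vec W1 -> vec W2) w :
  linmap f -> linmap g -> linmap h -> linmap k ->
  push (@shuffle X2 Y2 Z2 W2) (tmap f (tmap (tmap g h) k) w)
  = tmap (tmap f g) (tmap h k) (push (@shuffle X1 Y1 Z1 W1) w).
Proof.
move=> linf ling linh link.
move: w; apply: linmap_eq_bas; [linmap_tac|linmap_tac|move=> [x [[y z] t]]].
by rewrite push_bas !tmap_bas push_shuffle_tens.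
Qed.

Lemma tmul_tens (X Y : choiceType) (mX : vec (X * X) -> vec X)
    (mY : vec (Y * Y) -> vec Y) (a c : vec X) (b d : vec Y) :
  linmap mX -> linmap mY ->
  tmul mX mY (tens (tens a b) (tens c d)) = tens (mX (tens a c)) (mY (tens b d)).
Proof. by move=> linX linY; rewrite /tmul push_mid4_tens tmap_tens. Qed.

Lemma runit_tens (X : choiceType) (v : vec X) (s : vec unit) :
  runit (tens v s) = s@_tt *: v.
Proof.
move: v; apply: linmap_eq_bas; [linmap_tac| |move=> x].
  by move=> a u u'; rewrite scalerDr !scalerA mulrC.
move: s; apply: linmap_eq_bas; [linmap_tac| |move=> []].
  by move=> a u u'; rewrite mcoeffD mcoeffZ scalerDl scalerA.
by rewrite tens_bas /runit push_bas /bas mcoeffUU scale1r.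
Qed.

Lemma runit_tmap (X1 Y1 X2 : choiceType) (f : vec X1 -> vec X2)
    (g : vec Y1 -> vec unit) w :
  linmap f -> linmap g -> runit (tmap f g w) = f (runit (tmap (@idv K X1) g w)).
Proof.
move=> linf ling; move: w; apply: linmap_eq_bas; [linmap_tac|linmap_tac|move=> p].
by rewrite !tmap_bas !runit_tens linmapZ.
Qed.

End TensorCalculus.

Section HopfAxioms.
Variables (K : fieldType) (X : choiceType) (H : hopf_data K X).
Hypothesis hH : is_hopf H.
Local Notation m := (hmul H).
Local Notation D := (hcomul H).

Lemma linmap_hmul : linmap m.
Proof. by case: hH => -[]. Qed.

Lemma linmap_hcomul : linmap D.
Proof. by case: hH => -[]. Qed.

Lemma linfun_hcounit : Defs.linfun (hcounit H).
Proof. by case: hH => -[]. Qed.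

Lemma hmulA a b c : m (tens (m (tens a b)) c) = m (tens a (m (tens b c))).
Proof.
have linm := linmap_hmul; case: hH => _ [assoc _ _ _ _].
by have := assoc (tens (tens a b) c); rewrite push_asr_tens !tmap_tens; linmap_tac.
Qed.

Lemma hmulr1 a : m (tens a (hone H)) = a.
Proof. by case: hH => _ [_ /(_ a) [] _ ->]. Qed.

Lemma hcomulM a b : D (m (tens a b)) = tmul m m (tens (D a) (D b)).
Proof.
have [linm linD] := (linmap_hmul, linmap_hcomul).
case: hH => _ [_ _ _ _ [comulM _ _ _ _]].
by rewrite comulM tmap_tens.
Qed.

Lemma hcomul1 : D (hone H) = tens (hone H) (hone H).
Proof. by case: hH => _ [_ _ _ _ []]. Qed.

End HopfAxioms.

Section PartialComoduleCoalgebra.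
Variables (K : fieldType) (I J : choiceType).
Variables (A : hopf_data K I) (Y : hopf_data K J) (rho : vec K J -> vec K (I * J)).
Hypotheses (hA : is_hopf A) (hY : is_hopf Y) (hrho : linmap rho).

Local Notation vec := (vec K).
Local Notation mA := (hmul A).
Local Notation oA := (hone A).
Local Notation DA := (hcomul A).
Local Notation mY := (hmul Y).
Local Notation oY := (hone Y).
Local Notation DY := (hcomul Y).
Local Notation T := (Tmap A Y rho).

Let linmap_mA := linmap_hmul hA.
Let linmap_DA := linmap_hcomul hA.
Let linmap_mY := linmap_hmul hY.
Let linmap_DY := linmap_hcomul hY.
Let linfun_eY := linfun_hcounit hY.

Definition rmulA (a b : vec I) : vec I := mA (tens b a).
Definition rmulAA (s w : vec (I * I)) : vec (I * I) := tmul mA mA (tens w s).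
Definition rmulAAY (s : vec (I * I)) (z : vec (I * (I * J))) : vec (I * (I * J)) :=
  tmul mA (tmul mA mY) (tens z (push (@asr I I J) (tens s oY))).
Definition rho_eps (y : vec J) : vec I :=
  runit (tmap (@idv K I) (funv (hcounit Y)) (rho y)).

Lemma linmap_rmulA a : linmap (rmulA a).
Proof. by rewrite /rmulA; linmap_tac. Qed.

Lemma linmap_rmulAA s : linmap (rmulAA s).
Proof. by rewrite /rmulAA; linmap_tac. Qed.

Lemma linmap_rmulAA_l w : linmap (fun s => rmulAA s w).
Proof. by rewrite /rmulAA; linmap_tac. Qed.

Lemma linmap_rmulAAY s : linmap (rmulAAY s).
Proof. by rewrite /rmulAAY; linmap_tac. Qed.

Lemma linmap_rmulAAY_l z : linmap (fun s => rmulAAY s z).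
Proof. by rewrite /rmulAAY; linmap_tac. Qed.

Lemma linmap_Tmap : linmap T.
Proof. exact: linmap_linext. Qed.

Lemma linmap_Teps : linmap (Teps A Y rho).
Proof. by rewrite /Teps; have linT := linmap_Tmap; linmap_tac. Qed.

Lemma linmap_rho_eps : linmap rho_eps.
Proof. by rewrite /rho_eps; linmap_tac. Qed.

#[local] Hint Extern 1 (linmap (rmulA _)) => exact: linmap_rmulA : linmap.
#[local] Hint Extern 1 (linmap (rmulAA _)) => exact: linmap_rmulAA : linmap.
#[local] Hint Extern 1 (linmap (rmulAAY _)) => exact: linmap_rmulAAY : linmap.
#[local] Hint Extern 1 (linmap (fun s => rmulAAY s _)) => exact: linmap_rmulAAY_l : linmap.
#[local] Hint Extern 1 (linmap (Tmap _ _ _)) => exact: linmap_Tmap : linmap.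
#[local] Hint Extern 1 (linmap (Teps _ _ _)) => exact: linmap_Teps : linmap.
#[local] Hint Extern 1 (linmap rho_eps) => exact: linmap_rho_eps : linmap.

Lemma rmulA1 b : rmulA oA b = b.
Proof. exact: hmulr1. Qed.

Lemma tmap_rmulA1 (X : choiceType) (w : vec (I * X)) :
  tmap (rmulA oA) (@idv K X) w = w.
Proof. by rewrite -[RHS]tmap_idv; apply: eq_tmap => [v|//]; apply: rmulA1. Qed.

Lemma tmul_tensr1 (z : vec (I * J)) a :
  tmul mA mY (tens z (tens a oY)) = tmap (rmulA a) (@idv K J) z.
Proof.
move: z; apply: linmap_eq_tens; [linmap_tac|linmap_tac|move=> x y].
by rewrite tmul_tens // tmap_tens; linmap_tac; rewrite hmulr1.
Qed.

Lemma Tmap_tens u a : T (tens u a) = tmap (rmulA a) (@idv K J) (rho u).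
Proof.
rewrite -tmul_tensr1; move: u; apply: linmap_eq_bas; [linmap_tac|linmap_tac|move=> y].
move: a; apply: linmap_eq_bas; [linmap_tac|linmap_tac|move=> x].
by rewrite tens_bas /Tmap linext_bas.
Qed.

Lemma mult_iii_lhs_tens u a :
  tmap (@idv K I) DY (T (tens u a))
  = tmap (rmulA a) (@idv K (J * J)) (tmap (@idv K I) DY (rho u)).
Proof. by rewrite Tmap_tens !tmap_comp; linmap_tac. Qed.

Lemma asr_Tmap_asl (s : vec (J * (I * J))) :
  push (@asr I J J) (tmap T (@idv K J) (push (@asl J I J) s))
  = tmap mA (@idv K (J * J)) (push (@mid4 I J I J) (tmap rho (@idv K (I * J)) s)).
Proof.
move: s; apply: linmap_eq_tens; [linmap_tac|linmap_tac|move=> b t].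
move: t; apply: linmap_eq_tens; [linmap_tac|linmap_tac|move=> c d].
rewrite push_asl_tens !tmap_tens; linmap_tac.
by rewrite Tmap_tens push_asr_tensl push_mid4_tensl !tmap_comp; linmap_tac.
Qed.

Lemma mulA_tmap_rmulA a (v : vec (I * I)) :
  mA (tmap (@idv K I) (rmulA a) v) = rmulA a (mA v).
Proof.
move: v; apply: linmap_eq_tens; [linmap_tac|linmap_tac|move=> x y].
by rewrite tmap_tens; linmap_tac; rewrite /rmulA (hmulA hA).
Qed.

Lemma mulA_mid4_rmulA a (w : vec ((I * J) * (I * J))) :
  tmap mA (@idv K (J * J)) (push (@mid4 I J I J)
    (tmap (tmap (@idv K I) (@idv K J)) (tmap (rmulA a) (@idv K J)) w))
  = tmap (rmulA a) (@idv K (J * J))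
      (tmap mA (@idv K (J * J)) (push (@mid4 I J I J) w)).
Proof.
rewrite push_mid4_tmap; linmap_tac.
rewrite tmap_comp; linmap_tac.
rewrite tmap_comp; linmap_tac.
by apply: eq_tmap => v; [apply: mulA_tmap_rmulA | apply: tmap_idv].
Qed.

Lemma mult_iii_rhs_tens u a :
  push (@asr I J J) (tmap T (@idv K J) (push (@asl J I J)
    (tmap (@idv K J) T (push (@asr J J I) (tmap DY (@idv K I) (tens u a))))))
  = tmap (rmulA a) (@idv K (J * J))
      (tmap mA (@idv K (J * J)) (push (@mid4 I J I J) (tmap rho rho (DY u)))).
Proof.
rewrite tmap_tens; linmap_tac.
rewrite push_asr_tensl asr_Tmap_asl -mulA_mid4_rmulA; congr (tmap _ _ (push _ _)).
rewrite !tmap_comp; linmap_tac.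
by apply: eq_tmap => v; rewrite ?tmap_idv ?Tmap_tens.
Qed.

Lemma rmulAA_tens c d w : rmulAA (tens c d) w = tmap (rmulA c) (rmulA d) w.
Proof.
move: w; apply: linmap_eq_tens; [linmap_tac|linmap_tac|move=> x x'].
by rewrite /rmulAA tmul_tens // tmap_tens; linmap_tac.
Qed.

Lemma rmulAAY_tens c d z :
  rmulAAY (tens c d) z = tmap (rmulA c) (tmap (rmulA d) (@idv K J)) z.
Proof.
move: z; apply: linmap_eq_tens; [linmap_tac|linmap_tac|move=> x t].
rewrite /rmulAAY push_asr_tens tmul_tens; linmap_tac.
by rewrite tmul_tensr1 tmap_tens; linmap_tac.
Qed.

Lemma rmulAAY_comulA1 z : rmulAAY (DA oA) z = z.
Proof.
rewrite (hcomul1 hA) rmulAAY_tens -[RHS]tmap_idv.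
by apply: eq_tmap => v; [apply: rmulA1 | apply: tmap_rmulA1].
Qed.

Lemma mult_iv_lhs_tens u a :
  tmap (@idv K I) T (push (@asr I J I)
    (tmap T (@idv K I) (push (@asl J I I) (tmap (@idv K J) DA (tens u a)))))
  = rmulAAY (DA a) (tmap (@idv K I) rho (rho u)).
Proof.
rewrite tmap_tens; linmap_tac.
move: (DA a); apply: linmap_eq_tens; [linmap_tac|linmap_tac|move=> c d].
rewrite push_asl_tens tmap_tens; linmap_tac.
rewrite Tmap_tens push_asr_tensl rmulAAY_tens !tmap_comp; linmap_tac.
by apply: eq_tmap => [//|v]; rewrite Tmap_tens.
Qed.

Lemma comulA_rmulA a w :
  tmap DA (@idv K J) (tmap (rmulA a) (@idv K J) w)
  = tmap (rmulAA (DA a)) (@idv K J) (tmap DA (@idv K J) w).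
Proof.
rewrite !tmap_comp; linmap_tac.
by apply: eq_tmap => [v|//]; rewrite /rmulA /rmulAA (hcomulM hA).
Qed.

Lemma Teps_tens b x : Teps A Y rho (tens b x) = mA (tens (rho_eps b) x).
Proof.
rewrite /Teps Tmap_tens tmap_comp; linmap_tac.
rewrite runit_tmap; linmap_tac.
by congr (mA (tens (runit _) x)); apply: eq_tmap.
Qed.

Lemma Teps_mulA (v : vec (J * I)) :
  Teps A Y rho v = mA (tmap rho_eps (@idv K I) v).
Proof.
move: v; apply: linmap_eq_tens; [linmap_tac|linmap_tac|move=> b x].
by rewrite Teps_tens tmap_tens; linmap_tac.
Qed.

Lemma Teps_shuffle (w : vec (J * ((I * I) * J))) :
  tmap (Teps A Y rho) (@idv K (I * J)) (push (@shuffle J I I J) w)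
  = tmap mA (@idv K (I * J))
      (push (@shuffle I I I J) (tmap rho_eps (@idv K ((I * I) * J)) w)).
Proof.
have -> : tmap rho_eps (@idv K ((I * I) * J)) w
        = tmap rho_eps (tmap (tmap (@idv K I) (@idv K I)) (@idv K J)) w.
  apply: eq_tmap => [//|v]; rewrite -[LHS]tmap_idv.
  by apply: eq_tmap => [q|//]; rewrite tmap_idv.
rewrite push_shuffle_tmap; linmap_tac.
rewrite [in RHS]tmap_comp; linmap_tac.
by apply: eq_tmap => v; rewrite ?Teps_mulA ?tmap_idv.
Qed.

Lemma mulA_shuffle_rmulAA s (w : vec (I * ((I * I) * J))) :
  tmap mA (@idv K (I * J))
    (push (@shuffle I I I J) (tmap (@idv K I) (tmap (rmulAA s) (@idv K J)) w))
  = rmulAAY s (tmap mA (@idv K (I * J)) (push (@shuffle I I I J) w)).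
Proof.
have linmap_s : linmap (fun s => tmap (@idv K I) (tmap (rmulAA s) (@idv K J)) w).
  by apply: linmap_tmap_r => t; apply: linmap_tmap_l => q; apply: linmap_rmulAA_l.
move: s; apply: linmap_eq_tens; [linmap_tac|linmap_tac|move=> c d].
have -> : tmap (@idv K I) (tmap (rmulAA (tens c d)) (@idv K J)) w
        = tmap (@idv K I) (tmap (tmap (rmulA c) (rmulA d)) (@idv K J)) w.
  by apply: eq_tmap => [//|t]; apply: eq_tmap => [q|//]; apply: rmulAA_tens.
rewrite push_shuffle_tmap; linmap_tac.
rewrite rmulAAY_tens [in LHS]tmap_comp; linmap_tac.
rewrite [in RHS]tmap_comp; linmap_tac.
by apply: eq_tmap => [v|//]; apply: mulA_tmap_rmulA.
Qed.

Lemma mult_iv_rhs_tens u a :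
  tmap (Teps A Y rho) (@idv K (I * J)) (push (@shuffle J I I J)
    (tmap (@idv K J) (fun v => tmap DA (@idv K J) (T v))
      (push (@asr J J I) (tmap DY (@idv K I) (tens u a)))))
  = rmulAAY (DA a) (tmap mA (@idv K (I * J)) (push (@shuffle I I I J)
      (tmap rho_eps (fun y => tmap DA (@idv K J) (rho y)) (DY u)))).
Proof.
rewrite tmap_tens; linmap_tac.
rewrite push_asr_tensl Teps_shuffle -mulA_shuffle_rmulAA.
congr (tmap _ _ (push _ _)); rewrite !tmap_comp; linmap_tac.
by apply: eq_tmap => [//|v]; rewrite Tmap_tens comulA_rmulA.
Qed.

Lemma partial_comod_coalg_mult_of_hopf :
  partial_comod_coalg_hopf A Y rho -> partial_comod_coalg_mult A Y rho.
Proof.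
case=> counit_rho comul_rho coassoc_rho; split=> //.
- by move=> y y' a; split; eexists.
- apply: linmap_eq_tens; [linmap_tac|linmap_tac|move=> u a].
  by rewrite mult_iii_lhs_tens mult_iii_rhs_tens comul_rho.
- apply: linmap_eq_tens; [linmap_tac|linmap_tac|move=> u a].
  by rewrite mult_iv_lhs_tens mult_iv_rhs_tens coassoc_rho.
Qed.

Lemma partial_comod_coalg_hopf_of_mult :
  partial_comod_coalg_mult A Y rho -> partial_comod_coalg_hopf A Y rho.
Proof.
case=> counit_rho _ comul_T coassoc_T; split=> // y.
- have := comul_T (tens y oA).
  by rewrite mult_iii_lhs_tens mult_iii_rhs_tens !tmap_rmulA1.
- have := coassoc_T (tens y oA).
  by rewrite mult_iv_lhs_tens mult_iv_rhs_tens !rmulAAY_comulA1.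
Qed.

End PartialComoduleCoalgebra.

Theorem proposition3p8 (K : fieldType) (I J : choiceType)
  (A : hopf_data K I) (Y : hopf_data K J)
  (hA : is_hopf A) (hY : is_hopf Y)
  (rho : vec K J -> vec K (I * J)) (hrho : linmap rho) :
  partial_comod_coalg_hopf A Y rho <-> partial_comod_coalg_mult A Y rho.
Proof.
split; first exact: partial_comod_coalg_mult_of_hopf.
exact: partial_comod_coalg_hopf_of_mult.
Qed.
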